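(* Let $\Gamma=\operatorname{HNN}(G,H,\theta)$ be a non-ascending HNN extension. The following are equivalent: (i) $\operatorname{int}\Gamma=\{1\}$; (ii) the quasi-kernel $K_\varepsilon$ is trivial for some (equivalently, both) $\varepsilon\in\{\pm1\}$; (iii) for every finite subset $F\subseteq\Gamma\setminus\{1\}$ there exists $g\in\Gamma$ with $gFg^{-1}\cap G=\emptyset$; (iv) for every finite subset $F\subseteq\Gamma\setminus\{1\}$ there exists $g\in\Gamma$ with $gFg^{-1}\cap H=\emptyset$; (v) for every finite subset $F\subseteq G\setminus\{1\}$ there exists $g\in\Gamma$ with $gFg^{-1}\cap H=\emptyset$; (vi) for every finite subset $F\subseteq H\setminus\{1\}$ there exists $g\in\Gamma$ with $gFg^{-1}\cap H=\emptyset$. Moreover, if these conditions hold, then $\Gamma$ is a Powers group, and in particular $C^*$-simple.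
   Context: Let $G$ be a group, $H\le G$ a subgroup and $\theta:H\to G$ an injective homomorphism; $\Gamma=\operatorname{HNN}(G,H,\theta)=\langle G,\tau\mid \tau^{-1}h\tau=\theta(h)\ (h\in H)\rangle$. Set $H_{-1}=H$, $H_1=\theta(H)$. The extension is non-ascending if $H\neq G$ and $\theta(H)\neq G$. Fix sets $S_{-1},S_1$ of representatives of the left cosets of $H_{-1}$, resp. $H_1$, in $G$ with $1\in S_{-1}\cap S_1$. Every $g\in\Gamma$ has a unique normal form $g=g_1\tau^{\varepsilon_1}\cdots g_n\tau^{\varepsilon_n}g_{n+1}$ with $n\ge0$, $\varepsilon_i\in\{\pm1\}$, $g_i\in S_{-\varepsilon_i}$ for $1\le i\le n$, $g_{n+1}\in G$, and $g_i=1\Rightarrow\varepsilon_{i-1}=\varepsilon_i$ for $2\le i\le n$. Then $n$ is the length of $g$; if $n\ge1$, $\varepsilon_1$ is the type and $g_1$ the initial letter of $g$. For $\varepsilon\in\{\pm1\}$, $T_\varepsilon$ is the set of elements of length $\ge1$ and type $\varepsilon$, and $T_\varepsilon^\dagger\subseteq T_\varepsilon$ the subset of those with initial letter $1$. The quasi-kernels are $K_\varepsilon=\bigcap_{r\in\Gamma\setminus T_\varepsilon^\dagger} rHr^{-1}$; their normal closures in $\Gamma$ coincide, and this common normal subgroup is the interior $\operatorname{int}\Gamma$. $\Gamma$ is a Powers group if for every finite $F\subseteq\Gamma\setminus\{1\}$ and $n\ge1$ there exist a partition $\Gamma=D\sqcup E$ and $g_1,\dots,g_n\in\Gamma$ with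 $fD\cap D=\emptyset$ for $f\in F$ and $g_jE\cap g_kE=\emptyset$ for $j\ne k$. $C^*$-simple means the reduced group $C^*$-algebra is simple. *)

From Stdlib Require Import List Classical.
Import ListNotations.
Set Implicit Arguments.

Record Group : Type := {
  car :> Type;
  gmul : car -> car -> car;
  gone : car;
  ginv : car -> car;
  gmul_assoc : forall x y z, gmul x (gmul y z) = gmul (gmul x y) z;
  gmul_1l : forall x, gmul gone x = x;
  gmul_Vl : forall x, gmul (ginv x) x = gone }.
Arguments gmul {g} _ _.
Arguments gone {g}.
Arguments ginv {g} _.

Definition is_subgroup (G : Group) (H : G -> Prop) : Prop :=
  H gone /\ (forall x y, H x -> H y -> H (gmul x y)) /\
  (forall x, H x -> H (ginv x)).

Definition is_hom (G K : Group) (f : G -> K) : Prop :=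
  forall x y, f (gmul x y) = gmul (f x) (f y).
Arguments is_hom {G K} f.

Arguments is_subgroup {G} H.
(** theta : H -> G is an injective homomorphism (theta is given as a map on G,
    only its values on H matter). *)
Definition inj_hom_on (G : Group) (H : G -> Prop) (theta : G -> G) : Prop :=
  (forall x y, H x -> H y -> theta (gmul x y) = gmul (theta x) (theta y)) /\
  (forall x y, H x -> H y -> theta x = theta y -> x = y).

Arguments inj_hom_on {G} H theta.
Definition image_on (G : Group) (H : G -> Prop) (theta : G -> G) (g : G) : Prop :=
  exists h, H h /\ theta h = g.

Arguments image_on {G} H theta g.
Definition left_transversal (G : Group) (H S : G -> Prop) : Prop :=
  forall g : G, exists! s, S s /\ H (gmul (ginv s) g).

Arguments left_transversal {G} H S.
(** Gamma (with iota : G -> Gamma and tau) is HNN(G,H,theta), characterised by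
    the universal property of the presentation
    < G, tau | tau^-1 h tau = theta(h) (h in H) >. *)
Definition IsHNN (G : Group) (H : G -> Prop) (theta : G -> G)
  (Gam : Group) (iota : G -> Gam) (tau : Gam) : Prop :=
  is_hom iota /\
  (forall h, H h -> gmul (gmul (ginv tau) (iota h)) tau = iota (theta h)) /\
  (forall (K : Group) (phi : G -> K) (t : K),
     is_hom phi ->
     (forall h, H h -> gmul (gmul (ginv t) (phi h)) t = phi (theta h)) ->
     exists psi : Gam -> K,
       is_hom psi /\ (forall g, psi (iota g) = phi g) /\ psi tau = t /\
       (forall psi' : Gam -> K, is_hom psi' -> (forall g, psi' (iota g) = phi g) ->
          psi' tau = t -> forall x, psi' x = psi x)).

Arguments IsHNN {G} H theta {Gam} iota tau.
(** Signs epsilon in {+1,-1} are encoded as booleans: true = +1, false = -1. *)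
Definition tpow (Gam : Group) (tau : Gam) (e : bool) : Gam :=
  if e then tau else ginv tau.

(** Value of g_1 tau^e_1 ... g_n tau^e_n g_{n+1}, where l = [(g_1,e_1);...;(g_n,e_n)]. *)
Arguments tpow {Gam} tau e.
Definition nf_eval (G Gam : Group) (iota : G -> Gam) (tau : Gam)
  (l : list (G * bool)) (last : G) : Gam :=
  fold_right (fun (p : car G * bool) (acc : car Gam) => gmul (iota (fst p)) (gmul (tpow tau (snd p)) acc))
             (iota last) l.

(** g_i in S_{-e_i}: Sm = S_{-1} (reps for H_{-1}=H), Sp = S_1 (reps for H_1=theta(H)). *)
Arguments nf_eval {G Gam} iota tau l last.
Definition nf_letters (G : Group) (Sm Sp : G -> Prop) (l : list (G * bool)) : Prop :=
  Forall (fun p : car G * bool => if snd p then Sm (fst p) else Sp (fst p)) l.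

Arguments nf_letters {G} Sm Sp l.
Fixpoint nf_reduced (G : Group) (l : list (G * bool)) : Prop :=
  match l with
  | nil => True
  | p :: l' =>
      match l' with
      | nil => True
      | q :: _ => (fst q = gone -> snd p = snd q)
      end /\ nf_reduced G l'
  end.

Arguments nf_reduced {G} l.
Definition is_normal_form (G Gam : Group) (iota : G -> Gam) (tau : Gam)
  (Sm Sp : G -> Prop) (x : Gam) (l : list (G * bool)) (last : G) : Prop :=
  nf_letters Sm Sp l /\ nf_reduced l /\ nf_eval iota tau l last = x.

Arguments is_normal_form {G Gam} iota tau Sm Sp x l last.
Definition T_set (G Gam : Group) (iota : G -> Gam) (tau : Gam)
  (Sm Sp : G -> Prop) (e : bool) (x : Gam) : Prop :=
  exists g rest last, is_normal_form iota tau Sm Sp x ((g, e) :: rest) last.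

Arguments T_set {G Gam} iota tau Sm Sp e x.
Definition T_dag (G Gam : Group) (iota : G -> Gam) (tau : Gam)
  (Sm Sp : G -> Prop) (e : bool) (x : Gam) : Prop :=
  exists rest last, is_normal_form iota tau Sm Sp x ((gone, e) :: rest) last.

Arguments T_dag {G Gam} iota tau Sm Sp e x.
Definition quasi_kernel (G Gam : Group) (H : G -> Prop) (iota : G -> Gam) (tau : Gam)
  (Sm Sp : G -> Prop) (e : bool) (x : Gam) : Prop :=
  forall r : Gam, ~ T_dag iota tau Sm Sp e r ->
    exists h, H h /\ x = gmul (gmul r (iota h)) (ginv r).

Arguments quasi_kernel {G Gam} H iota tau Sm Sp e x.
Definition is_normal_subgroup (Gam : Group) (N : Gam -> Prop) : Prop :=
  is_subgroup N /\ (forall y z, N y -> N (gmul (gmul z y) (ginv z))).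

Arguments is_normal_subgroup {Gam} N.
Definition normal_closure (Gam : Group) (A : Gam -> Prop) (x : Gam) : Prop :=
  forall N : Gam -> Prop, is_normal_subgroup N -> (forall y, A y -> N y) -> N x.

Arguments normal_closure {Gam} A x.
(** int Gamma: the (common) normal closure of the quasi-kernels; taken here as
    the normal closure of K_{+1} u K_{-1}, which equals either one since they
    coincide. *)
Definition interior (G Gam : Group) (H : G -> Prop) (iota : G -> Gam) (tau : Gam)
  (Sm Sp : G -> Prop) : Gam -> Prop :=
  normal_closure (fun x => quasi_kernel H iota tau Sm Sp true x \/
                           quasi_kernel H iota tau Sm Sp false x).

Arguments interior {G Gam} H iota tau Sm Sp _.
Definition trivial_set (Gam : Group) (A : Gam -> Prop) : Prop :=
  forall x, A x -> x = gone.

Arguments trivial_set {Gam} A.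
Definition conj (Gam : Group) (g f : Gam) : Gam := gmul (gmul g f) (ginv g).

Arguments conj {Gam} g f.
(** Powers group; E is the complement of D, g_1..g_n are gs 0 .. gs (n-1). *)
Definition is_powers_group (Gam : Group) : Prop :=
  forall F : list Gam, (forall f, In f F -> f <> gone) ->
  forall n : nat, 1 <= n ->
  exists (D : Gam -> Prop) (gs : nat -> Gam),
    (forall f x, In f F -> D x -> ~ D (gmul f x)) /\
    (forall j k, j < n -> k < n -> j <> k ->
       forall x y, ~ D x -> ~ D y -> gmul (gs j) x <> gmul (gs k) y).

(** Letting Gam act, through the universal property, on the reduced words
    (paired with Gam itself, which makes the action faithful) shows that every
    element has a unique normal form.  If the interior is trivial, no y <> 1
    fixes every coset x G with x in T_e^dagger, since a conjugate of such a y
    lies in a quasi-kernel.  Hence every f <> 1 moves some cylinder (the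
    elements whose normal form begins with a given prefix) off itself, and
    conjugating by prefixes gives one cylinder P moved off itself by every f in
    a finite set F.  Conjugation by the inverse of the value of P then moves F
    off G, and the translates of the complement of P by the values of s^j times
    that inverse are pairwise disjoint cylinders: this is the Powers property.
    Conversely, if K_+ contains h <> 1 then h and b h b^-1 (b a nontrivial
    representative) lie in H and no conjugation moves both off H; and
    conjugation by b tau^e carries K_e into K_{-e}, so the two quasi-kernels are
    trivial together. *)

From Stdlib Require Import List Bool Classical ClassicalEpsilon.
From Stdlib Require Import FunctionalExtensionality ProofIrrelevance.
Import ListNotations.
Set Implicit Arguments.

Local Notation "x ** y" := (gmul x y) (at level 40, left associativity).

Section GroupTheory.
Context {K : Group}.
Implicit Types x y z : K.

Lemma mulgA x y z : x ** (y ** z) = x ** y ** z.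
Proof. apply gmul_assoc. Qed.

Lemma mul1g x : gone ** x = x.
Proof. apply gmul_1l. Qed.

Lemma mulVg x : ginv x ** x = gone.
Proof. apply gmul_Vl. Qed.

Lemma mulgV x : x ** ginv x = gone.
Proof.
  rewrite <- (mul1g (x ** ginv x)), <- (mulVg (ginv x)) at 1.
  rewrite <- mulgA, (mulgA (ginv x) x (ginv x)), mulVg, mul1g. apply mulVg.
Qed.

Lemma mulg1 x : x ** gone = x.
Proof. rewrite <- (mulVg x), mulgA, mulgV, mul1g. reflexivity. Qed.

Lemma mulKg x y : ginv x ** (x ** y) = y.
Proof. rewrite mulgA, mulVg, mul1g. reflexivity. Qed.

Lemma mulKVg x y : x ** (ginv x ** y) = y.
Proof. rewrite mulgA, mulgV, mul1g. reflexivity. Qed.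

Lemma mulgK x y : y ** x ** ginv x = y.
Proof. rewrite <- mulgA, mulgV, mulg1. reflexivity. Qed.

Lemma mulgKV x y : y ** ginv x ** x = y.
Proof. rewrite <- mulgA, mulVg, mulg1. reflexivity. Qed.

Lemma mulgI x y z : x ** y = x ** z -> y = z.
Proof. intro E. rewrite <- (mulKg x y), E, mulKg. reflexivity. Qed.

Lemma mulIg x y z : y ** x = z ** x -> y = z.
Proof. intro E. rewrite <- (mulgK x y), E, mulgK. reflexivity. Qed.

Lemma invg_unique x y : x ** y = gone -> y = ginv x.
Proof. intro E. apply (mulgI x). rewrite E, mulgV. reflexivity. Qed.

Lemma invgK x : ginv (ginv x) = x.
Proof. symmetry. apply invg_unique, mulVg. Qed.

Lemma invMg x y : ginv (x ** y) = ginv y ** ginv x.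
Proof.
  symmetry. apply invg_unique.
  rewrite mulgA, <- (mulgA x y), mulgV, mulg1, mulgV. reflexivity.
Qed.

Lemma invg1 : ginv (gone : K) = gone.
Proof. symmetry. apply invg_unique, mul1g. Qed.

Lemma conjg_eq1 g x : ginv g ** x ** g = gone -> x = gone.
Proof. intro E. apply (mulgI (ginv g)), (mulIg g). rewrite E, mulg1, mulVg. reflexivity. Qed.

End GroupTheory.

Lemma morph1 (A B : Group) (f : A -> B) : is_hom f -> f gone = gone.
Proof. intro Hf. apply (mulgI (f gone)). rewrite <- Hf, !mulg1. reflexivity. Qed.

Lemma morphV (A B : Group) (f : A -> B) x : is_hom f -> f (ginv x) = ginv (f x).
Proof. intro Hf. apply invg_unique. rewrite <- Hf, mulgV. apply morph1, Hf. Qed.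

Ltac gsimpl := repeat first [rewrite mulgK | rewrite mulgKV | rewrite mulgV | rewrite mulVg
  | rewrite mul1g | rewrite mulg1 | rewrite invg1].

Lemma app_inv_length (A : Type) (l1 l2 l3 l4 : list A) :
  l1 ++ l2 = l3 ++ l4 -> length l1 = length l3 -> l1 = l3.
Proof.
  revert l3. induction l1 as [|x l1 IH]; intros [|y l3] E L; simpl in *; try discriminate; auto.
  injection E as -> E. f_equal. apply IH; auto.
Qed.

Section HNNExtension.
Context (G : Group) (H : G -> Prop) (theta : G -> G) (Gam : Group) (iota : G -> Gam)
  (tau : Gam) (Sm Sp : G -> Prop).
Hypotheses (H_sub : is_subgroup H) (theta_inj : inj_hom_on H theta)
  (Gam_HNN : IsHNN H theta iota tau)
  (H_proper : ~ forall g, H g) (thetaH_proper : ~ forall g, image_on H theta g)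
  (Sm_transversal : left_transversal H Sm) (Sm1 : Sm gone)
  (Sp_transversal : left_transversal (image_on H theta) Sp) (Sp1 : Sp gone).

Local Notation Tdag := (T_dag iota tau Sm Sp).

(* Signs are booleans with [true] for +1, and [Hgrp e], [Srep e] are H_{-e}, S_{-e}:
   the letter in front of tau^e is reduced modulo H_{-e}. *)
Definition Hgrp (e : bool) (x : G) : Prop := if e then H x else image_on H theta x.
Definition Srep (e : bool) (x : G) : Prop := if e then Sm x else Sp x.

Lemma theta1 : theta gone = gone.
Proof.
  destruct H_sub as [H1 _]. destruct theta_inj as [Hm _].
  apply (mulgI (theta gone)). rewrite <- Hm by auto. rewrite !mulg1. reflexivity.
Qed.

Lemma thetaV h : H h -> theta (ginv h) = ginv (theta h).
Proof.
  intro Hh. destruct H_sub as [H1 [HM HV]]. destruct theta_inj as [Hm _].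
  apply invg_unique. rewrite <- Hm by auto. rewrite mulgV. apply theta1.
Qed.

Lemma Hgrp_subgroup e : is_subgroup (Hgrp e).
Proof.
  destruct H_sub as [H1 [HM HV]]. destruct theta_inj as [Hm Hi].
  destruct e; simpl.
  - split; [|split]; auto.
  - split; [|split].
    + exists gone. split; auto. apply theta1.
    + intros x y [a [Ha <-]] [b [Hb <-]]. exists (a ** b). split; auto.
    + intros x [a [Ha <-]]. exists (ginv a). split; auto. apply thetaV; auto.
Qed.

Lemma Hgrp1 e : Hgrp e gone.
Proof. apply (Hgrp_subgroup e). Qed.

Lemma HgrpM e x y : Hgrp e x -> Hgrp e y -> Hgrp e (x ** y).
Proof. apply (Hgrp_subgroup e). Qed.

Lemma HgrpV e x : Hgrp e x -> Hgrp e (ginv x).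
Proof. apply (Hgrp_subgroup e). Qed.

Lemma Srep_transversal e : left_transversal (Hgrp e) (Srep e).
Proof. destruct e; assumption. Qed.

Lemma Srep1 e : Srep e gone.
Proof. destruct e; assumption. Qed.

Definition crep (e : bool) (g : G) : G :=
  proj1_sig (constructive_indefinite_description _
    (match Srep_transversal e g with ex_intro _ s P => ex_intro _ s (proj1 P) end)).

Lemma crepP e g : Srep e (crep e g) /\ Hgrp e (ginv (crep e g) ** g).
Proof. unfold crep. destruct constructive_indefinite_description as [s Ps]. exact Ps. Qed.

Lemma crep_unique e g s : Srep e s -> Hgrp e (ginv s ** g) -> s = crep e g.
Proof.
  intros H1 H2. destruct (Srep_transversal e g) as [s0 [P0 U0]].
  pose proof (crepP e g) as R.
  transitivity s0; [symmetry|]; apply U0; auto.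
Qed.

Lemma crep_id e s : Srep e s -> crep e s = s.
Proof. intro. symmetry. apply crep_unique; auto. rewrite mulVg. apply Hgrp1. Qed.

Lemma crep_eq1 e g : crep e g = gone -> Hgrp e g.
Proof. intro E. destruct (crepP e g) as [_ P]. rewrite E, invg1, mul1g in P. exact P. Qed.

Lemma crep_Hgrp e g : Hgrp e g -> crep e g = gone.
Proof. intro. symmetry. apply crep_unique. apply Srep1. rewrite invg1, mul1g. auto. Qed.

Lemma crepMr e g k : Hgrp e k -> crep e (g ** k) = crep e g.
Proof.
  intro Hk. symmetry. apply crep_unique. apply crepP.
  rewrite mulgA. apply HgrpM; auto. apply crepP.
Qed.

Lemma Srep_Hgrp_eq1 e g : Srep e g -> Hgrp e g -> g = gone.
Proof. intros. rewrite <- (crep_id e g); auto. apply crep_Hgrp; auto. Qed.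

Lemma Srep_nontrivial e : exists b, Srep e b /\ b <> gone.
Proof.
  assert (NP : ~ forall g, Hgrp e g) by (destruct e; assumption).
  apply not_all_ex_not in NP as [g Hg]. exists (crep e g).
  split; [apply crepP | intro E; apply Hg, (crep_eq1 e g), E].
Qed.

Definition theta_inv (k : G) : G :=
  match excluded_middle_informative (image_on H theta k) with
  | left p => proj1_sig (constructive_indefinite_description _ p)
  | right _ => gone
  end.

Lemma theta_invP k : image_on H theta k -> H (theta_inv k) /\ theta (theta_inv k) = k.
Proof.
  intro P. unfold theta_inv. destruct excluded_middle_informative as [p|n]; [|contradiction].
  destruct constructive_indefinite_description as [h Ph]. exact Ph.
Qed.

Lemma theta_invK h : H h -> theta_inv (theta h) = h.
Proof.
  intro Hh. assert (P : image_on H theta (theta h)) by (exists h; auto).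
  destruct (theta_invP P) as [A B]. destruct theta_inj as [_ Hi]. apply Hi; auto.
Qed.

Definition twist (e : bool) (k : G) : G := if e then theta k else theta_inv k.

Lemma twist_Hgrp e k : Hgrp e k -> Hgrp (negb e) (twist e k).
Proof.
  destruct e; simpl; intro P.
  - exists k; auto.
  - apply theta_invP; auto.
Qed.

Lemma twistM e k1 k2 : Hgrp e k1 -> Hgrp e k2 -> twist e (k1 ** k2) = twist e k1 ** twist e k2.
Proof.
  destruct theta_inj as [Hm Hi]. destruct H_sub as [H1 [HM HV]].
  destruct e; simpl; intros P1 P2.
  - apply Hm; auto.
  - destruct P1 as [a [Ha <-]]. destruct P2 as [b [Hb <-]].
    rewrite <- Hm by auto. rewrite !theta_invK; auto.
Qed.

Lemma twist1 e : twist e gone = gone.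
Proof.
  destruct e; simpl; [apply theta1|].
  pose proof (theta_invK (proj1 H_sub)) as E. rewrite theta1 in E. exact E.
Qed.

Lemma iota_hom : is_hom iota.
Proof. apply Gam_HNN. Qed.

Lemma iota1 : iota gone = gone.
Proof. apply morph1, iota_hom. Qed.

Lemma iotaM x y : iota (x ** y) = iota x ** iota y.
Proof. apply iota_hom. Qed.

Lemma iotaV x : iota (ginv x) = ginv (iota x).
Proof. apply morphV, iota_hom. Qed.

Lemma tpow_relation e k : Hgrp e k -> iota k ** tpow tau e = tpow tau e ** iota (twist e k).
Proof.
  destruct Gam_HNN as [_ [R _]].
  destruct e; simpl; intro P.
  - rewrite <- R by auto. rewrite mulgA, mulKVg. reflexivity.
  - destruct P as [h [Hh <-]]. rewrite theta_invK by auto.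
    rewrite <- R by auto. rewrite mulgK. reflexivity.
Qed.

Lemma tpow_mulN e : tpow tau e ** tpow tau (negb e) = gone.
Proof. destruct e; simpl. apply mulgV. apply mulVg. Qed.

Definition word := (list (G * bool) * G)%type.
Definition nf_word (l : list (G * bool)) : Prop := nf_letters Sm Sp l /\ nf_reduced l.
Definition word_val (w : word) : Gam := nf_eval iota tau (fst w) (snd w).

(* The normal form of [iota a * word_val (l, d)]: write a g_1 = s k with s in S_{-e}
   and k in H_{-e}, then move k across tau^e as [twist e k]. *)
Fixpoint lmul_word (a : G) (l : list (G * bool)) (d : G) {struct l} : word :=
  match l with
  | nil => (nil, a ** d)
  | (g, e) :: rest =>
      let s := crep e (a ** g) in
      let r := lmul_word (twist e (ginv s ** (a ** g))) rest d in
      ((s, e) :: fst r, snd r)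
  end.
Definition lmul_pair (a : G) (w : word) : word := lmul_word a (fst w) (snd w).

Definition tmul_word (e : bool) (w : word) : word :=
  match fst w with
  | (g, e') :: rest =>
      if excluded_middle_informative (e' = negb e /\ g = gone) then (rest, snd w)
      else ((gone, e) :: fst w, snd w)
  | nil => ([(gone, e)], snd w)
  end.

Lemma word_val_cons g e l d : word_val ((g, e) :: l, d) = iota g ** (tpow tau e ** word_val (l, d)).
Proof. reflexivity. Qed.

Lemma word_val_lmul a l d : word_val (lmul_word a l d) = iota a ** word_val (l, d).
Proof.
  revert a. induction l as [|[g e] l IH]; intro a.
  - unfold word_val; simpl. apply iotaM.
  - simpl lmul_word. set (s := crep e (a ** g)). set (k := ginv s ** (a ** g)).
    assert (Hk : Hgrp e k) by apply crepP.
    rewrite word_val_cons, <- surjective_pairing, IH, word_val_cons.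
    rewrite (mulgA (tpow tau e)), <- (tpow_relation e k Hk), !mulgA, <- !iotaM.
    unfold k. rewrite mulKVg, <- !mulgA. reflexivity.
Qed.

Lemma word_val_tmul e w : word_val (tmul_word e w) = tpow tau e ** word_val w.
Proof.
  destruct w as [l d]. unfold tmul_word; simpl fst; simpl snd.
  destruct l as [|[g e'] l].
  - unfold word_val; simpl. rewrite iota1, mul1g. reflexivity.
  - destruct excluded_middle_informative as [[E1 E2]|n].
    + subst. rewrite word_val_cons, iota1, mul1g, mulgA, tpow_mulN, mul1g. reflexivity.
    + rewrite word_val_cons with (g := gone), iota1, mul1g. reflexivity.
Qed.

Lemma nf_letters_cons g e l : nf_letters Sm Sp ((g, e) :: l) <-> Srep e g /\ nf_letters Sm Sp l.
Proof. unfold nf_letters. rewrite Forall_cons_iff. reflexivity. Qed.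

Lemma nf_word_nil : nf_word nil.
Proof. split; [constructor | exact I]. Qed.

Lemma nf_word_tail p l : nf_word (p :: l) -> nf_word l.
Proof. intros [A B]. split; [inversion A; auto | destruct l; simpl in *; tauto]. Qed.

Lemma nf_word_head g e l : nf_word ((g, e) :: l) -> Srep e g.
Proof. intros [A _]. apply nf_letters_cons in A. tauto. Qed.

Lemma nf_word_cons g e l : Srep e g -> nf_word l ->
  (forall g2 e2 r, l = (g2, e2) :: r -> g2 = gone -> e = e2) -> nf_word ((g, e) :: l).
Proof.
  intros S [A B] C. split; [apply nf_letters_cons; auto|].
  destruct l as [|[g2 e2] r]; simpl; [auto|]. split; auto. intro. eapply C; eauto.
Qed.

Lemma nf_word_cons_sign g e g2 e2 r : nf_word ((g, e) :: (g2, e2) :: r) -> g2 = gone -> e = e2.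
Proof. intros [_ [B _]] E. exact (B E). Qed.

Lemma nf_word_single g e : Srep e g -> nf_word [(g, e)].
Proof. intro S. apply nf_word_cons; [exact S | apply nf_word_nil | discriminate]. Qed.

Definition joinable (l1 l2 : list (G * bool)) : Prop :=
  forall l0 p g e r, l1 = l0 ++ [p] -> l2 = (g, e) :: r -> g = gone -> snd p = e.

Lemma nf_reduced_catl (l1 l2 : list (G * bool)) : nf_reduced (l1 ++ l2) -> nf_reduced l1.
Proof.
  induction l1 as [|p l1 IH]; simpl.
  - intros; exact I.
  - destruct l1 as [|q l1]; simpl.
    + intros; split; exact I.
    + intros [A B]. split; auto. apply IH. exact B.
Qed.

Lemma nf_reduced_catr (l1 l2 : list (G * bool)) : nf_reduced (l1 ++ l2) -> nf_reduced l2.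
Proof.
  induction l1 as [|p l1 IH]; simpl; auto.
  intros [_ B]. auto.
Qed.

Lemma nf_word_catl l1 l2 : nf_word (l1 ++ l2) -> nf_word l1.
Proof.
  intros [A B]. split. unfold nf_letters in *. apply Forall_app in A. tauto.
  eapply nf_reduced_catl; eauto.
Qed.

Lemma nf_word_catr l1 l2 : nf_word (l1 ++ l2) -> nf_word l2.
Proof.
  intros [A B]. split. unfold nf_letters in *. apply Forall_app in A. tauto.
  eapply nf_reduced_catr; eauto.
Qed.

Lemma nf_word_cat l1 l2 : nf_word l1 -> nf_word l2 -> joinable l1 l2 -> nf_word (l1 ++ l2).
Proof.
  intros [A1 B1] [A2 B2] J. split.
  - unfold nf_letters in *. apply Forall_app; auto.
  - clear A1 A2. induction l1 as [|p l1 IH]; simpl; auto.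
    split.
    + destruct l1 as [|q l1]; simpl.
      * destruct l2 as [|[g e] r]; auto. intro E. apply (J nil p g e r); auto.
      * simpl in B1. tauto.
    + apply IH.
      * destruct l1; simpl in *; tauto.
      * intros l0 p' g e r E1 E2 E3. apply (J (p :: l0) p' g e r); auto. rewrite E1; reflexivity.
Qed.

Lemma joinable_nilr l : joinable l nil.
Proof. unfold joinable. intros l0 p g e r _ E. discriminate. Qed.

Lemma joinable_nill l : joinable nil l.
Proof. unfold joinable. intros l0 p g e r E. destruct l0; discriminate. Qed.

Lemma joinable_rcons l0 g0 e0 g e r :
  joinable (l0 ++ [(g0, e0)]) ((g, e) :: r) <-> (g = gone -> e0 = e).
Proof.
  split.
  - intros J E. apply (J l0 (g0, e0) g e r); auto.
  - unfold joinable. intros C l1 p g' e' r' E1 E2 E3. apply app_inj_tail in E1 as [_ <-].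
    injection E2 as -> -> ->. simpl. auto.
Qed.

Lemma lmul_word_signs a l d : map snd (fst (lmul_word a l d)) = map snd l.
Proof. revert a. induction l as [|[g e] l IH]; intro a; simpl; [|f_equal]; auto. Qed.

Lemma lmul_word_length a l d : length (fst (lmul_word a l d)) = length l.
Proof. rewrite <- (length_map snd), lmul_word_signs, length_map. reflexivity. Qed.

Lemma lmul_word_letters a l d1 d2 : fst (lmul_word a l d1) = fst (lmul_word a l d2).
Proof. revert a. induction l as [|[g e] l IH]; intro a; simpl; [|f_equal]; auto. Qed.

Lemma lmul_word_cat a l1 l2 d :
  exists a', fst (lmul_word a (l1 ++ l2) d) = fst (lmul_word a l1 d) ++ fst (lmul_word a' l2 d).
Proof.
  revert a. induction l1 as [|[g e] l1 IH]; intro a; [exists a; reflexivity|].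
  destruct (IH (twist e (ginv (crep e (a ** g)) ** (a ** g)))) as [a' E].
  exists a'. simpl. rewrite E. reflexivity.
Qed.

Lemma lmul_word_head_Hgrp e k l d : Hgrp e k ->
  lmul_word k ((gone, e) :: l) d =
  ((gone, e) :: fst (lmul_word (twist e k) l d), snd (lmul_word (twist e k) l d)).
Proof. intro Hk. simpl. rewrite mulg1, crep_Hgrp, invg1, mul1g by exact Hk. reflexivity. Qed.

(* Multiplying by an element of H_{e} cannot create a letter 1 in front of tau^{-e}. *)
Lemma lmul_word_head_sign g e k l d : Hgrp (negb e) k -> nf_word ((g, e) :: l) ->
  forall g2 e2 r, fst (lmul_word k l d) = (g2, e2) :: r -> g2 = gone -> e = e2.
Proof.
  intros Hk V g2 e2 r E E1. destruct l as [|[g3 e3] l]; [discriminate|].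
  injection E as <- <- _. apply crep_eq1 in E1.
  destruct (bool_dec e e3) as [|ne]; auto.
  assert (e3 = negb e) by (destruct e, e3; simpl in *; congruence). subst e3.
  assert (Hg3 : Hgrp (negb e) g3) by (rewrite <- (mulKg k g3); apply HgrpM; [apply HgrpV|]; auto).
  apply (nf_word_cons_sign V). apply (Srep_Hgrp_eq1 (negb e)); auto.
  eapply nf_word_head, nf_word_tail; eauto.
Qed.

Lemma nf_word_lmul a l d : nf_word l -> nf_word (fst (lmul_word a l d)).
Proof.
  revert a. induction l as [|[g e] l IH]; intros a V; [apply nf_word_nil|].
  apply nf_word_cons; [apply crepP | apply IH; eapply nf_word_tail; eauto|].
  eapply lmul_word_head_sign; [apply twist_Hgrp, crepP | exact V].
Qed.

Lemma lmul_word1 l d : nf_word l -> lmul_word gone l d = (l, d).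
Proof.
  induction l as [|[g e] l IH]; intro V; simpl; rewrite mul1g; [reflexivity|].
  rewrite crep_id by (eapply nf_word_head; eauto).
  rewrite mulVg, twist1, IH by (eapply nf_word_tail; eauto). reflexivity.
Qed.

Lemma lmul_wordM a b l d :
  lmul_word a (fst (lmul_word b l d)) (snd (lmul_word b l d)) = lmul_word (a ** b) l d.
Proof.
  revert a b. induction l as [|[g e] l IH]; intros a b; simpl; [rewrite mulgA; reflexivity|].
  set (s := crep e (b ** g)). set (k := ginv s ** (b ** g)).
  assert (Hk : Hgrp e k) by apply crepP.
  assert (E1 : a ** b ** g = a ** s ** k).
  { unfold k. rewrite <- (mulgA a s), mulKVg, mulgA. reflexivity. }
  assert (E2 : crep e (a ** s) = crep e (a ** b ** g)).
  { rewrite E1, (crepMr e (a ** s) k Hk). reflexivity. }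
  rewrite IH, E2. set (s3 := crep e (a ** b ** g)).
  assert (Hk2 : Hgrp e (ginv s3 ** (a ** s))) by (unfold s3; rewrite <- E2; apply crepP).
  rewrite <- twistM by auto.
  replace (ginv s3 ** (a ** s) ** k) with (ginv s3 ** (a ** b ** g)); [reflexivity|].
  rewrite E1, !mulgA. reflexivity.
Qed.

Lemma tmul_word_cancel e l d : tmul_word e ((gone, negb e) :: l, d) = (l, d).
Proof.
  unfold tmul_word; simpl.
  destruct excluded_middle_informative as [_|n]; [reflexivity | exfalso; apply n; auto].
Qed.

Lemma tmul_word_push e l d : (forall r, l <> (gone, negb e) :: r) ->
  tmul_word e (l, d) = ((gone, e) :: l, d).
Proof.
  intro N. unfold tmul_word; simpl. destruct l as [|[g e'] r]; [reflexivity|].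
  destruct excluded_middle_informative as [[-> ->]|_]; [|reflexivity].
  exfalso. apply (N r). reflexivity.
Qed.

Lemma tmul_word_no_cancel g e l d :
  nf_word ((g, e) :: l) -> tmul_word e (l, d) = ((gone, e) :: l, d).
Proof.
  intro V. apply tmul_word_push. intros r ->.
  pose proof (nf_word_cons_sign V eq_refl). destruct e; discriminate.
Qed.

Lemma nf_word_tmul e l d : nf_word l -> nf_word (fst (tmul_word e (l, d))).
Proof.
  intro V. destruct (classic (exists r, l = (gone, negb e) :: r)) as [[r ->]|N].
  - rewrite tmul_word_cancel. eapply nf_word_tail; eauto.
  - rewrite tmul_word_push by (intros r E; apply N; exists r; exact E).
    apply nf_word_cons; [apply Srep1 | exact V|].
    intros g2 e2 r -> ->. destruct (bool_dec e e2) as [|ne]; auto.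
    exfalso. apply N. exists r. do 2 f_equal. destruct e, e2; simpl in *; congruence.
Qed.

Lemma tmul_wordK e l d : nf_word l -> tmul_word (negb e) (tmul_word e (l, d)) = (l, d).
Proof.
  intro V. destruct (classic (exists r, l = (gone, negb e) :: r)) as [[r ->]|N].
  - rewrite tmul_word_cancel. erewrite tmul_word_no_cancel; [reflexivity | exact V].
  - rewrite tmul_word_push by (intros r E; apply N; exists r; exact E).
    rewrite <- (negb_involutive e) at 2. apply tmul_word_cancel.
Qed.

Lemma tmul_word_relation h l d : H h -> nf_word l ->
  tmul_word false (lmul_pair h (tmul_word true (l, d))) = lmul_pair (theta h) (l, d).
Proof.
  intros Hh V. unfold lmul_pair.
  assert (Htheta : Hgrp false (theta h)) by (exists h; auto).
  destruct (classic (exists r, l = (gone, false) :: r)) as [[r ->]|N].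
  - rewrite tmul_word_cancel. simpl fst; simpl snd.
    rewrite lmul_word_head_Hgrp by exact Htheta. simpl twist. rewrite theta_invK by exact Hh.
    destruct (lmul_word h r d) as [l' d'] eqn:El. apply tmul_word_push.
    intros r' E. assert (Ef : fst (lmul_word h r d) = (gone, true) :: r') by (rewrite El; exact E).
    apply (@lmul_word_head_sign gone false h r d Hh V) in Ef; [discriminate | reflexivity].
  - rewrite tmul_word_push by (intros r E; apply N; exists r; exact E).
    simpl fst; simpl snd. rewrite lmul_word_head_Hgrp by exact Hh.
    simpl twist. destruct (lmul_word (theta h) l d). apply (tmul_word_cancel false).
Qed.

Definition NFW := {w : word | nf_word (fst w)}.

Lemma NFW_eq (x y : NFW) : proj1_sig x = proj1_sig y -> x = y.
Proof.
  destruct x as [x px], y as [y py]; simpl. intro E. subst y. f_equal. apply proof_irrelevance.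
Qed.

Definition lmul_NFW (a : G) (x : NFW) : NFW :=
  exist _ (lmul_pair a (proj1_sig x)) (nf_word_lmul a (snd (proj1_sig x)) (proj2_sig x)).
Definition tmul_NFW (e : bool) (x : NFW) : NFW :=
  exist _ (tmul_word e (fst (proj1_sig x), snd (proj1_sig x)))
    (nf_word_tmul e (snd (proj1_sig x)) (proj2_sig x)).

Record Perm := mkPerm { pf : NFW -> NFW; pinv : NFW -> NFW;
  pK : forall x, pinv (pf x) = x; pK' : forall x, pf (pinv x) = x }.
(* Since [act] below maps x to a pair with second component x, it is
   injective, which yields the uniqueness of normal forms. *)
Record EvPerm := mkEvPerm { ep_perm : Perm; ep_val : Gam;
  ep_valP : forall w : NFW,
    word_val (proj1_sig (pf ep_perm w)) = ep_val ** word_val (proj1_sig w) }.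

Lemma EvPerm_eq (a b : EvPerm) :
  (forall x, pf (ep_perm a) x = pf (ep_perm b) x) -> ep_val a = ep_val b -> a = b.
Proof.
  destruct a as [[f fi K1 K2] g P], b as [[f' fi' K1' K2'] g' P']; simpl. intros Ef Eg.
  assert (f = f') by (apply functional_extensionality; auto). subst f'.
  assert (fi = fi').
  { apply functional_extensionality. intro x. rewrite <- (K2' x) at 1. apply K1. }
  subst fi' g'.
  assert (K1 = K1') by apply proof_irrelevance.
  assert (K2 = K2') by apply proof_irrelevance. subst.
  assert (P = P') by apply proof_irrelevance. subst. reflexivity.
Qed.

Lemma ep_mul_pK (a b : EvPerm) x :
  pinv (ep_perm b) (pinv (ep_perm a) (pf (ep_perm a) (pf (ep_perm b) x))) = x.
Proof. rewrite !pK. reflexivity. Qed.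

Lemma ep_mul_pK' (a b : EvPerm) x :
  pf (ep_perm a) (pf (ep_perm b) (pinv (ep_perm b) (pinv (ep_perm a) x))) = x.
Proof. rewrite !pK'. reflexivity. Qed.

Lemma ep_mul_ok (a b : EvPerm) w :
  word_val (proj1_sig (pf (ep_perm a) (pf (ep_perm b) w))) =
  ep_val a ** ep_val b ** word_val (proj1_sig w).
Proof. rewrite ep_valP, ep_valP, mulgA. reflexivity. Qed.

Definition ep_mul (a b : EvPerm) : EvPerm :=
  mkEvPerm (mkPerm (fun x => pf (ep_perm a) (pf (ep_perm b) x))
    (fun x => pinv (ep_perm b) (pinv (ep_perm a) x))
    (ep_mul_pK a b) (ep_mul_pK' a b)) (ep_val a ** ep_val b) (ep_mul_ok a b).

Lemma ep_one_ok (w : NFW) : word_val (proj1_sig w) = gone ** word_val (proj1_sig w).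
Proof. rewrite mul1g. reflexivity. Qed.

Definition ep_one : EvPerm :=
  mkEvPerm (mkPerm (fun x => x) (fun x => x) (fun x => eq_refl) (fun x => eq_refl)) gone ep_one_ok.

Lemma ep_inv_ok (a : EvPerm) w :
  word_val (proj1_sig (pinv (ep_perm a) w)) = ginv (ep_val a) ** word_val (proj1_sig w).
Proof.
  pose proof (ep_valP a (pinv (ep_perm a) w)) as E. rewrite pK' in E.
  rewrite E, mulKg. reflexivity.
Qed.

Definition ep_inv (a : EvPerm) : EvPerm :=
  mkEvPerm (mkPerm (pinv (ep_perm a)) (pf (ep_perm a)) (pK' (ep_perm a)) (pK (ep_perm a)))
    (ginv (ep_val a)) (ep_inv_ok a).

Definition EvPermGroup : Group.
Proof.
  refine {| car := EvPerm; gmul := ep_mul; gone := ep_one; ginv := ep_inv |}.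
  - intros x y z. apply EvPerm_eq; simpl; auto. apply mulgA.
  - intros x. apply EvPerm_eq; simpl; auto. apply mul1g.
  - intros x. apply EvPerm_eq; simpl; auto. apply pK. apply mulVg.
Defined.

Lemma lmul_NFW_inv a b x : b ** a = gone -> lmul_NFW b (lmul_NFW a x) = x.
Proof.
  intro E. apply NFW_eq. destruct x as [[l d] v]. unfold lmul_NFW, lmul_pair; simpl.
  rewrite lmul_wordM, E. apply lmul_word1; auto.
Qed.

Lemma ep_lmul_ok a (w : NFW) :
  word_val (proj1_sig (lmul_NFW a w)) = iota a ** word_val (proj1_sig w).
Proof. destruct w as [[l d] v]. simpl. unfold lmul_pair; simpl. apply word_val_lmul. Qed.

Definition ep_lmul (a : G) : EvPermGroup :=
  mkEvPerm (mkPerm (lmul_NFW a) (lmul_NFW (ginv a)) (fun x => @lmul_NFW_inv a (ginv a) x (mulVg a))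
    (fun x => @lmul_NFW_inv (ginv a) a x (mulgV a)))
    (iota a) (ep_lmul_ok a).

Lemma tmul_NFWK e x : tmul_NFW (negb e) (tmul_NFW e x) = x.
Proof.
  apply NFW_eq. destruct x as [[l d] v]. unfold tmul_NFW; simpl.
  rewrite <- surjective_pairing. apply (tmul_wordK e d v).
Qed.

Lemma ep_tau_ok (w : NFW) : word_val (proj1_sig (tmul_NFW true w)) = tau ** word_val (proj1_sig w).
Proof. destruct w as [[l d] v]. simpl. apply (word_val_tmul true). Qed.

Definition ep_tau : EvPermGroup :=
  mkEvPerm (mkPerm (tmul_NFW true) (tmul_NFW false) (tmul_NFWK true) (tmul_NFWK false))
    tau ep_tau_ok.

Lemma ep_lmul_hom : is_hom ep_lmul.
Proof.
  intros a b. apply EvPerm_eq; simpl.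
  - intro x. apply NFW_eq. destruct x as [[l d] v]. unfold lmul_NFW, lmul_pair; simpl.
    rewrite lmul_wordM. reflexivity.
  - apply iotaM.
Qed.

Lemma ep_relation h : H h -> gmul (gmul (ginv ep_tau) (ep_lmul h)) ep_tau = ep_lmul (theta h).
Proof.
  intro Hh. apply EvPerm_eq; simpl.
  - intro x. apply NFW_eq. destruct x as [[l d] v]. unfold lmul_NFW, tmul_NFW; simpl.
    apply tmul_word_relation; auto.
  - apply Gam_HNN; auto.
Qed.

Lemma act_exists : exists act : Gam -> EvPermGroup,
  is_hom act /\ (forall g, act (iota g) = ep_lmul g) /\ act tau = ep_tau.
Proof.
  destruct Gam_HNN as [_ [_ U]].
  destruct (U EvPermGroup ep_lmul ep_tau ep_lmul_hom ep_relation) as [act [A [B [C _]]]].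
  exists act. auto.
Qed.

Definition act : Gam -> EvPermGroup := proj1_sig (constructive_indefinite_description _ act_exists).
Lemma actP : is_hom act /\ (forall g, act (iota g) = ep_lmul g) /\ act tau = ep_tau.
Proof. unfold act. destruct constructive_indefinite_description as [p P]. exact P. Qed.

Lemma act_val x : ep_val (act x) = x.
Proof.
  destruct actP as [A [B C]].
  destruct Gam_HNN as [I1 [I2 U]]. destruct (U Gam iota tau I1 I2) as [p0 [_ [_ [_ U0]]]].
  assert (E1 : forall y, (fun z => ep_val (act z)) y = p0 y).
  { apply U0.
    - intros a b. rewrite A. reflexivity.
    - intro g. rewrite B. reflexivity.
    - rewrite C. reflexivity. }
  assert (E2 : forall y, (fun z => z) y = p0 y).
  { apply U0; auto. intros a b; reflexivity. }
  simpl in *. rewrite E1, E2. reflexivity.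
Qed.

Definition NFW_nil : NFW := exist _ (nil, gone) nf_word_nil.
Definition nf (x : Gam) : word := proj1_sig (pf (ep_perm (act x)) NFW_nil).

Lemma nf_word_nf x : nf_word (fst (nf x)).
Proof. unfold nf. apply proj2_sig. Qed.

Lemma nfK x : word_val (nf x) = x.
Proof.
  unfold nf. rewrite ep_valP, act_val. unfold word_val; simpl. rewrite iota1, mulg1. reflexivity.
Qed.

Lemma act_mul a b x : pf (ep_perm (act (a ** b))) x = pf (ep_perm (act a)) (pf (ep_perm (act b)) x).
Proof. destruct actP as [A _]. rewrite A. reflexivity. Qed.

Lemma act_iota g x : pf (ep_perm (act (iota g))) x = lmul_NFW g x.
Proof. destruct actP as [_ [B _]]. rewrite B. reflexivity. Qed.

Lemma act_tpow e x : pf (ep_perm (act (tpow tau e))) x = tmul_NFW e x.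
Proof.
  destruct actP as [A [_ C]]. destruct e; simpl.
  - rewrite C. reflexivity.
  - rewrite (morphV tau A), C. reflexivity.
Qed.

Lemma lmul_word_head g e l d :
  nf_word ((g, e) :: l) -> lmul_word g ((gone, e) :: l) d = ((g, e) :: l, d).
Proof.
  intro V. simpl. rewrite mulg1, crep_id by (eapply nf_word_head; eauto).
  rewrite mulVg, twist1, lmul_word1 by (eapply nf_word_tail; eauto). reflexivity.
Qed.

Lemma nf_word_val l d : nf_word l -> nf (word_val (l, d)) = (l, d).
Proof.
  intro V. unfold nf. induction l as [|[g e] l IH].
  - unfold word_val; simpl. rewrite act_iota; simpl. unfold lmul_pair; simpl. rewrite mulg1. reflexivity.
  - rewrite word_val_cons, !act_mul, act_iota, act_tpow.
    assert (E : pf (ep_perm (act (word_val (l, d)))) NFW_nil = exist _ (l, d) (nf_word_tail V)).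
    { apply NFW_eq. simpl. apply IH. eapply nf_word_tail; eauto. }
    rewrite E. simpl. unfold lmul_pair; simpl fst; simpl snd.
    rewrite (tmul_word_no_cancel d V). simpl fst; simpl snd. apply lmul_word_head; auto.
Qed.

Lemma nf_unique l d x : nf_word l -> word_val (l, d) = x -> nf x = (l, d).
Proof. intros V E. subst x. apply nf_word_val; auto. Qed.

Definition letters (x : Gam) := fst (nf x).

Lemma nf_iota a : nf (iota a) = (nil, a).
Proof. apply nf_unique. apply nf_word_nil. reflexivity. Qed.

Lemma iota_inj a b : iota a = iota b -> a = b.
Proof. intro E. pose proof (nf_iota a) as A. rewrite E, nf_iota in A. congruence. Qed.

Lemma word_valMr l c a : word_val (l, c ** a) = word_val (l, c) ** iota a.
Proof.
  induction l as [|[g e] l IH].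
  - unfold word_val; simpl. apply iotaM.
  - rewrite !word_val_cons, IH, !mulgA. reflexivity.
Qed.

Lemma word_val_split l c : word_val (l, c) = word_val (l, gone) ** iota c.
Proof. rewrite <- word_valMr, mul1g. reflexivity. Qed.

Lemma word_val_cat l1 l2 c : word_val (l1 ++ l2, c) = word_val (l1, gone) ** word_val (l2, c).
Proof.
  induction l1 as [|[g e] l IH].
  - unfold word_val at 2; simpl. rewrite iota1, mul1g. reflexivity.
  - simpl app. rewrite !word_val_cons, IH, !mulgA. reflexivity.
Qed.

Lemma word_val_nf x : x = word_val (letters x, snd (nf x)).
Proof. unfold letters. rewrite <- surjective_pairing, nfK. reflexivity. Qed.

Lemma nf_word_letters x : nf_word (letters x).
Proof. apply nf_word_nf. Qed.

Lemma nf_lmul a x : nf (iota a ** x) = lmul_word a (letters x) (snd (nf x)).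
Proof.
  rewrite (surjective_pairing (lmul_word a (letters x) (snd (nf x)))).
  apply nf_unique. apply nf_word_lmul, nf_word_letters.
  rewrite <- surjective_pairing, word_val_lmul, <- word_val_nf. reflexivity.
Qed.

Lemma nf_tmul e x : nf (tpow tau e ** x) = tmul_word e (letters x, snd (nf x)).
Proof.
  rewrite (surjective_pairing (tmul_word e (letters x, snd (nf x)))).
  apply nf_unique. apply nf_word_tmul, nf_word_letters.
  rewrite <- surjective_pairing, word_val_tmul, <- word_val_nf. reflexivity.
Qed.

Lemma letters_lmul a x : letters (iota a ** x) = fst (lmul_word a (letters x) gone).
Proof. unfold letters at 1. rewrite nf_lmul. apply lmul_word_letters. Qed.

Lemma letters_word_val l d : nf_word l -> letters (word_val (l, d)) = l.
Proof. intro V. unfold letters. rewrite nf_word_val; auto. Qed.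

Lemma letters_mulr x a : letters (x ** iota a) = letters x.
Proof.
  rewrite (word_val_nf x) at 1. rewrite <- word_valMr. apply letters_word_val, nf_word_letters.
Qed.

Definition fixes_coset (y x : Gam) : Prop := exists a, y ** x = x ** iota a.

Lemma fixes_coset_conj w y x : fixes_coset y (w ** x) -> fixes_coset (ginv w ** y ** w) x.
Proof. intros [a Ea]. exists a. rewrite <- !mulgA, Ea, !mulgA. gsimpl. reflexivity. Qed.

Lemma fixes_cosetE y x : fixes_coset y x <-> letters (y ** x) = letters x.
Proof.
  split.
  - intros [a E]. rewrite E. apply letters_mulr.
  - intro E. exists (ginv (snd (nf x)) ** snd (nf (y ** x))).
    rewrite (word_val_nf x) at 2. rewrite <- word_valMr, mulKVg, <- E. apply word_val_nf.
Qed.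

Lemma T_dagE e x : Tdag e x <-> exists rest, letters x = (gone, e) :: rest.
Proof.
  split.
  - intros [rest [last [A [B C]]]]. exists rest. unfold letters.
    rewrite (@nf_unique ((gone, e) :: rest) last x); auto. split; auto.
  - intros [rest E]. exists rest, (snd (nf x)). split; [|split].
    + pose proof (nf_word_letters x) as [A _]. rewrite E in A. exact A.
    + pose proof (nf_word_letters x) as [_ A]. rewrite E in A. exact A.
    + rewrite <- E. symmetry. apply word_val_nf.
Qed.

Lemma nf_prefix_mul l1 y : nf_word l1 -> joinable l1 (letters y) ->
  nf (word_val (l1, gone) ** y) = (l1 ++ letters y, snd (nf y)).
Proof.
  intros V J. apply nf_unique. apply nf_word_cat; auto. apply nf_word_letters.
  rewrite word_val_cat, <- word_val_nf. reflexivity.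
Qed.

Definition has_prefix (Q : list (G * bool)) (x : Gam) : Prop := exists R, letters x = Q ++ R.

Lemma letters_tpow e x : ~ Tdag (negb e) x -> letters (tpow tau e ** x) = (gone, e) :: letters x.
Proof.
  intro NT. unfold letters at 1. rewrite nf_tmul, tmul_word_push; [reflexivity|].
  intros r E. apply NT, T_dagE. exists r. exact E.
Qed.

Lemma T_dag_tpow e x : ~ Tdag (negb e) x -> Tdag e (tpow tau e ** x).
Proof. intro NT. apply T_dagE. exists (letters x). apply letters_tpow, NT. Qed.

Lemma letters_lmul_cons a x g e r : letters x = (g, e) :: r ->
  exists r', letters (iota a ** x) = (crep e (a ** g), e) :: r'.
Proof. intro E. rewrite letters_lmul, E. eexists. reflexivity. Qed.

Lemma T_dag_lmul e b x : Tdag e x -> ~ Hgrp e b -> ~ Tdag e (iota b ** x).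
Proof.
  intros T nHb T'. apply T_dagE in T as [R ER]. apply T_dagE in T' as [R' ER'].
  destruct (letters_lmul_cons b x ER) as [r' E']. rewrite ER' in E'. injection E' as E1 _.
  apply nHb. rewrite <- (mulg1 b). apply crep_eq1. symmetry. exact E1.
Qed.

Lemma Srep_not_Hgrp e b : Srep e b -> b <> gone -> ~ Hgrp e b.
Proof. intros S n Hb. apply n. apply (Srep_Hgrp_eq1 e); auto. Qed.

Lemma not_T_dag_iota e a : ~ Tdag e (iota a).
Proof.
  intro T. apply T_dagE in T as [r R]. unfold letters in R. rewrite nf_iota in R. discriminate.
Qed.

Definition Kq (e : bool) := quasi_kernel H iota tau Sm Sp e.
Definition Int := interior H iota tau Sm Sp.

Lemma interior_trivial_quasi_kernel e x : trivial_set Int -> Kq e x -> x = gone.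
Proof.
  intros T Kx. apply T. intros N _ HA. apply HA. destruct e; auto.
Qed.

Lemma quasi_kernels_trivial_interior : (forall e, trivial_set (Kq e)) -> trivial_set Int.
Proof.
  intros T x Hx. apply (Hx (fun z => z = gone)).
  - split; [split; [|split]|].
    + reflexivity.
    + intros a b -> ->. apply mul1g.
    + intros a ->. apply invg1.
    + intros a b ->. rewrite mulg1, mulgV. reflexivity.
  - intros y [A|A]; [apply (T true y A) | apply (T false y A)].
Qed.

Lemma quasi_kernel_conj_H e k r : Kq e k -> ~ Tdag e (ginv r) ->
  exists h, H h /\ conj r k = iota h.
Proof.
  intros Kk NT. destruct (Kk _ NT) as [h [Hh ->]]. exists h. split; auto.
  unfold conj. rewrite invgK, !mulgA. gsimpl. reflexivity.
Qed.

Lemma quasi_kernel_in_H e k : Kq e k -> exists h, H h /\ k = iota h.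
Proof.
  intro Kk. destruct (@quasi_kernel_conj_H e k gone Kk) as [h [Hh E]].
  - rewrite invg1, <- iota1. apply not_T_dag_iota.
  - exists h. split; auto. rewrite <- E. unfold conj. gsimpl. reflexivity.
Qed.

(* r outside T_{-e}^dagger makes b tau^e r a normal form with initial letter b <> 1. *)
Lemma quasi_kernel_conj e k b : Kq e k -> Srep e b -> b <> gone ->
  Kq (negb e) (ginv (iota b ** tpow tau e) ** k ** (iota b ** tpow tau e)).
Proof.
  intros Kk Sb nb r NT.
  assert (NT2 : ~ Tdag e (iota b ** tpow tau e ** r)).
  { rewrite <- mulgA. apply T_dag_lmul; [apply T_dag_tpow, NT | apply Srep_not_Hgrp; auto]. }
  destruct (Kk _ NT2) as [h [Hh ->]]. exists h. split; auto.
  set (w := iota b ** tpow tau e). rewrite (invMg w r), !mulgA. gsimpl. reflexivity.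
Qed.

Lemma quasi_kernel_trivial_negb e : trivial_set (Kq (negb e)) -> trivial_set (Kq e).
Proof.
  intros T k Kk. destruct (Srep_nontrivial e) as [b [Sb nb]].
  exact (conjg_eq1 _ _ (T _ (quasi_kernel_conj Kk Sb nb))).
Qed.

(* For every g, one of g^-1 and (g b)^-1 lies outside T_+^dagger. *)
Lemma quasi_kernel_conj_pair k : Kq true k -> k <> gone ->
  exists F : list G, (forall f, In f F -> H f /\ f <> gone) /\
    forall g : Gam, exists f, In f F /\ exists a, H a /\ conj g (iota f) = iota a.
Proof.
  intros Kk nk. destruct (quasi_kernel_in_H Kk) as [h [Hh ->]].
  assert (nh : h <> gone) by (intro; subst; apply nk, iota1).
  destruct (Srep_nontrivial true) as [b [Sb nb]].
  assert (nHb : ~ Hgrp true (ginv b)).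
  { intro Hb. apply (@Srep_not_Hgrp true b Sb nb). rewrite <- (invgK b). apply HgrpV, Hb. }
  assert (Hbh : H (b ** h ** ginv b)).
  { destruct (@quasi_kernel_conj_H true _ (iota b) Kk) as [h' [Hh' E]].
    - rewrite <- iotaV. apply not_T_dag_iota.
    - unfold conj in E. rewrite <- iotaV, <- !iotaM in E. apply iota_inj in E.
      rewrite E. exact Hh'. }
  exists [h; b ** h ** ginv b]. split.
  - intros f [<-|[<-|[]]]; split; auto.
    intro E. apply nh, (conjg_eq1 (ginv b)). rewrite invgK. exact E.
  - intro g. destruct (classic (Tdag true (ginv g))) as [T|NT].
    + exists (b ** h ** ginv b). split; [right; left; reflexivity|].
      destruct (@quasi_kernel_conj_H true _ (g ** iota b) Kk) as [h2 [Hh2 E2]].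
      * rewrite invMg, <- iotaV. apply T_dag_lmul; auto.
      * exists h2. split; auto. rewrite <- E2. unfold conj.
        rewrite !iotaM, iotaV, invMg, !mulgA. reflexivity.
    + exists h. split; [left; reflexivity|]. apply (@quasi_kernel_conj_H true _ g Kk NT).
Qed.

Lemma nf_tau : nf tau = ([(gone, true)], gone).
Proof.
  apply nf_unique; [apply nf_word_single, Srep1|].
  unfold word_val; simpl. rewrite iota1, mul1g, mulg1. reflexivity.
Qed.

Lemma nf_iota_tau c : nf (iota c ** tau) = ([(crep true c, true)], theta (ginv (crep true c) ** c)).
Proof.
  rewrite nf_lmul. unfold letters. rewrite nf_tau. simpl. rewrite !mulg1. reflexivity.
Qed.

Lemma T_dag_tau : Tdag true tau.
Proof.
  pose proof (T_dag_tpow true (@not_T_dag_iota false gone)) as T.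
  simpl tpow in T. rewrite iota1, mulg1 in T. exact T.
Qed.

Lemma H_of_tau_conj a b : ginv tau ** iota a ** tau = iota b -> H a.
Proof.
  intro E. apply NNPP. intro nHa.
  pose proof (letters_tpow false (@T_dag_lmul true a tau T_dag_tau nHa)) as L.
  simpl tpow in L. rewrite mulgA, E in L. unfold letters at 1 in L.
  rewrite nf_iota in L. discriminate.
Qed.

Lemma not_joinable l q Q : ~ joinable l (q :: Q) ->
  exists l0 g0 e0, l = l0 ++ [(g0, e0)] /\ fst q = gone /\ e0 <> snd q.
Proof.
  intro NJ. destruct (classic (l = nil)) as [->|Hl].
  - exfalso. apply NJ, joinable_nill.
  - destruct (exists_last Hl) as [l' [[g0 e0] El]]. subst l.
    destruct q as [g e]. exists l', g0, e0. split; auto.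
    rewrite joinable_rcons in NJ. simpl.
    destruct (classic (g = gone)) as [Eg|Eg].
    + split; [exact Eg| intro E; apply NJ; intro; exact E].
    + exfalso; apply NJ; intro; contradiction.
Qed.

Lemma not_T_dag_mulr_tau r : ~ Tdag false r -> ~ Tdag false (r ** tau).
Proof.
  intros NT T. apply T_dagE in T as [rest ER].
  set (l := letters r) in *. set (c := snd (nf r)).
  assert (Er : r ** tau = word_val (l, gone) ** (iota c ** tau)).
  { rewrite (word_val_nf r) at 1. rewrite word_val_split. fold l c. rewrite mulgA. reflexivity. }
  set (s := crep true c) in *. set (c' := theta (ginv s ** c)).
  assert (Ey : letters (iota c ** tau) = [(s, true)]).
  { unfold letters. rewrite nf_iota_tau. reflexivity. }
  destruct (classic (joinable l [(s, true)])) as [J|NJ].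
  - rewrite <- Ey in J. pose proof (@nf_prefix_mul l (iota c ** tau) (nf_word_letters r) J) as E.
    rewrite <- Er in E. unfold letters in ER. rewrite E in ER. simpl in ER. rewrite Ey in ER.
    destruct l as [|p l'] eqn:El.
    + simpl in ER. discriminate.
    + simpl in ER. injection ER as -> _. apply NT, T_dagE. exists l'. fold l. rewrite El. reflexivity.
  - apply not_joinable in NJ as [l0 [g0 [e0 [El [Es Ee]]]]]. simpl in Es, Ee.
    assert (e0 = false) by (destruct e0; auto; contradiction). subst e0.
    assert (Eq : r ** tau = word_val (l0, g0 ** c')).
    { rewrite Er, El, word_val_cat. rewrite (word_val_split l0 (g0 ** c')), iotaM.
      pose proof (word_val_nf (iota c ** tau)) as X. rewrite Ey in X.
      rewrite nf_iota_tau in X. simpl in X. fold s c' in X. rewrite X.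
      rewrite Es. unfold word_val; simpl. rewrite !iota1. gsimpl.
      rewrite !mulgA. gsimpl. reflexivity. }
    assert (V0 : nf_word l0).
    { apply (@nf_word_catl l0 [(g0, false)]). rewrite <- El. apply nf_word_letters. }
    rewrite Eq in ER. rewrite letters_word_val in ER by auto.
    apply NT. apply T_dagE. exists (rest ++ [(g0, false)]). fold l. rewrite El, ER. reflexivity.
Qed.

(* If y fixes every coset x G with x in T_+^dagger, then tau^-1 y tau lies in K_-. *)
Lemma fixes_T_dag_cosets_true y : trivial_set Int ->
  (forall x, Tdag true x -> fixes_coset y x) -> y = gone.
Proof.
  intros TI F. apply (conjg_eq1 tau), (@interior_trivial_quasi_kernel false _ TI).
  intros r NT.
  destruct (F _ (T_dag_tpow true NT)) as [a Ea].
  destruct (F _ (T_dag_tpow true (not_T_dag_mulr_tau NT))) as [b Eb]. simpl tpow in Ea, Eb.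
  assert (Ha : H a).
  { apply (@H_of_tau_conj a b), (mulgI (tau ** r ** tau)).
    rewrite !mulgA in Eb. rewrite !mulgA, <- Eb, mulgK, <- (mulgA y), Ea. reflexivity. }
  exists a. split; [exact Ha|].
  apply (mulIg r). rewrite mulgKV, <- !mulgA, Ea, !mulgA. gsimpl. reflexivity.
Qed.

Lemma fixes_T_dag_cosets_false y : trivial_set Int ->
  (forall x, Tdag false x -> fixes_coset y x) -> y = gone.
Proof.
  intros TI F. destruct (Srep_nontrivial true) as [b [Sb nb]].
  apply (conjg_eq1 (ginv tau ** iota b)), fixes_T_dag_cosets_true; [exact TI|].
  intros x T. apply fixes_coset_conj, F. rewrite <- mulgA.
  apply (T_dag_tpow false), T_dag_lmul; [exact T | apply Srep_not_Hgrp; auto].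
Qed.

Lemma fixes_T_dag_cosets_trivial e y :
  trivial_set Int -> (forall x, Tdag e x -> fixes_coset y x) -> y = gone.
Proof. destruct e. apply fixes_T_dag_cosets_true. apply fixes_T_dag_cosets_false. Qed.

Definition prefix_val (P : list (G * bool)) : Gam := word_val (P, gone).

Lemma has_prefix_drop P Q x : has_prefix (P ++ Q) x -> has_prefix Q (ginv (prefix_val P) ** x).
Proof.
  intros [R ER]. exists R.
  assert (V : nf_word (P ++ (Q ++ R))) by (rewrite app_assoc, <- ER; apply nf_word_letters).
  rewrite (word_val_nf x), ER, <- app_assoc, word_val_cat. fold (prefix_val P). rewrite mulKg.
  apply letters_word_val. eapply nf_word_catr; eauto.
Qed.

Definition moves_off (Q : list (G * bool)) (f : Gam) : Prop :=
  forall x, has_prefix Q x -> ~ has_prefix Q (f ** x).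

Lemma moves_off_catl P Q f : moves_off P f -> moves_off (P ++ Q) f.
Proof.
  intros M x [R ER] [R' ER']. apply (M x).
  - exists (Q ++ R). rewrite ER, app_assoc. reflexivity.
  - exists (Q ++ R'). rewrite ER', app_assoc. reflexivity.
Qed.

Lemma moves_off_conj P Q f : moves_off Q (ginv (prefix_val P) ** f ** prefix_val P) ->
  moves_off (P ++ Q) f.
Proof.
  intros M x Cx Cfx. apply has_prefix_drop in Cx. apply has_prefix_drop in Cfx.
  apply (M _ Cx). rewrite <- !mulgA, mulKVg. exact Cfx.
Qed.

(* Q is the normal form of some x in T_{-delta}^dagger whose coset x G is moved by
   iota c; left multiplication by iota c preserves the length of normal forms. *)
Lemma separating_prefix_iota c delta : trivial_set Int -> c <> gone ->
  exists Q, Q <> nil /\ nf_word Q /\ (forall r, Q <> (gone, delta) :: r) /\ moves_off Q (iota c).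
Proof.
  intros TI nc.
  assert (Ex : exists x, Tdag (negb delta) x /\ ~ fixes_coset (iota c) x).
  { apply NNPP. intro N. apply nc, iota_inj. rewrite iota1.
    apply (@fixes_T_dag_cosets_trivial (negb delta) _ TI).
    intros x T. apply NNPP. intro nF. apply N. exists x; auto. }
  destruct Ex as [x [T nF]]. rewrite fixes_cosetE in nF. apply T_dagE in T as [R0 ER0].
  exists (letters x). split; [|split; [|split]].
  - rewrite ER0. discriminate.
  - apply nf_word_letters.
  - intros r E. rewrite ER0 in E. injection E as E. destruct delta; discriminate.
  - intros y [R ER] [R' ER']. apply nF.
    rewrite letters_lmul, ER in ER'. rewrite letters_lmul.
    destruct (lmul_word_cat c (letters x) R gone) as [a' Ea']. rewrite Ea' in ER'.
    apply app_inv_length in ER'; [exact ER' | apply lmul_word_length].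
Qed.

Lemma nth1_cat (l l' : list (G * bool)) p d :
  l <> nil -> nth 1 (l ++ p :: l') d = nth 1 (l ++ [p]) d.
Proof. intro N. destruct l as [|a [|b l1]]; simpl; auto. contradiction. Qed.

(* Elements outside G: after the letters of f comes a letter (crep (c s), eps), so the
   cylinder of [(s, eps); (b, eps)] is moved off itself once b differs from the second
   letter of f x. *)
Lemma separating_prefix_long f : letters f <> nil ->
  exists s e b, s <> gone /\ nf_word [(s, e); (b, e)] /\ moves_off [(s, e); (b, e)] f.
Proof.
  intro NEl. set (l := letters f) in *. set (c := snd (nf f)).
  destruct (exists_last NEl) as [l0 [[g0 eps] El]].
  destruct (Srep_nontrivial eps) as [s [Ss ns]].
  set (t := nth 1 (l ++ [(crep eps (c ** s), eps)]) (gone, eps)).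
  set (b := if excluded_middle_informative (t = (gone, eps)) then s else gone).
  assert (Hb : (b, eps) <> t).
  { unfold b. destruct excluded_middle_informative as [E|n].
    - rewrite E. intro E2. injection E2 as E3. contradiction.
    - intro E2. apply n. rewrite <- E2. reflexivity. }
  assert (Sb : Srep eps b) by (unfold b; destruct excluded_middle_informative; auto; apply Srep1).
  exists s, eps, b. split; [exact ns | split].
  - apply nf_word_cons; [exact Ss | apply nf_word_single, Sb|].
    intros g2 e2 r E _. injection E as _ -> _. reflexivity.
  - intros x [R ER] [R' ER'].
    destruct (@letters_lmul_cons c x s eps ((b, eps) :: R) ER) as [r' E'].
    assert (J : joinable l (letters (iota c ** x))) by (rewrite E', El; apply joinable_rcons; auto).
    assert (E2 : letters (f ** x) = l ++ letters (iota c ** x)).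
    { rewrite (word_val_nf f), word_val_split, <- mulgA. unfold letters at 1.
      rewrite nf_prefix_mul; [reflexivity | apply nf_word_letters | exact J]. }
    rewrite E2, E' in ER'.
    apply Hb. unfold t. rewrite <- nth1_cat with (l' := r') by auto. rewrite ER'. reflexivity.
Qed.

Lemma separating_prefix f delta : trivial_set Int -> f <> gone ->
  exists Q, Q <> nil /\ nf_word Q /\ (forall r, Q <> (gone, delta) :: r) /\ moves_off Q f.
Proof.
  intros TI nf1. destruct (classic (letters f = nil)) as [El|NEl].
  - assert (Ef : f = iota (snd (nf f))) by (rewrite (word_val_nf f) at 1; rewrite El; reflexivity).
    rewrite Ef in nf1 |- *. apply separating_prefix_iota; [exact TI|].
    intro E. apply nf1. rewrite E. apply iota1.
  - destruct (separating_prefix_long f NEl) as [s [e [b [ns [V M]]]]].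
    exists [(s, e); (b, e)]. split; [discriminate|]. split; [exact V|]. split; [|exact M].
    intros r E. injection E as E. contradiction.
Qed.

(* Induction on F: append to P a prefix separating the conjugate of the new element by the
   value of P, chosen so that the concatenation stays reduced. *)
Lemma common_separating_prefix F : trivial_set Int -> (forall f, In f F -> f <> gone) ->
  exists P, P <> nil /\ nf_word P /\ forall f, In f F -> moves_off P f.
Proof.
  intro TI. induction F as [|f F IH]; intro HF.
  - exists [(gone, true)]. split; [discriminate|].
    split; [apply nf_word_single, Srep1 | intros f []].
  - destruct IH as [P [NP [VP HP]]]; [intros; apply HF; right; auto|].
    destruct (exists_last NP) as [P0 [[g0 eP] EP]].
    assert (nf' : ginv (prefix_val P) ** f ** prefix_val P <> gone).
    { intro E. apply (HF f); [left; reflexivity|]. exact (conjg_eq1 _ _ E). }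
    destruct (separating_prefix (negb eP) TI nf') as [Q [NQ [VQ [HQ MQ]]]].
    exists (P ++ Q). split; [|split].
    + destruct P; [contradiction | discriminate].
    + apply nf_word_cat; auto. destruct Q as [|[g e] r]; [contradiction|].
      rewrite EP. apply joinable_rcons. intros ->.
      destruct (bool_dec eP e) as [|ne]; auto. exfalso. apply (HQ r).
      do 2 f_equal. destruct eP, e; simpl; congruence.
    + intros f0 [<-|Hf0].
      * apply moves_off_conj, MQ.
      * apply moves_off_catl, HP, Hf0.
Qed.

Lemma has_prefix_prefix_val P : nf_word P -> has_prefix P (prefix_val P).
Proof. intro V. exists nil. rewrite app_nil_r. apply letters_word_val, V. Qed.

(* Otherwise the normal form of the translate could be appended to P, and x would have
   prefix P. *)
Lemma letters_off_prefix P0 g0 e0 x : nf_word (P0 ++ [(g0, e0)]) ->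
  ~ has_prefix (P0 ++ [(g0, e0)]) x ->
  exists R, letters (ginv (prefix_val (P0 ++ [(g0, e0)])) ** x) = (gone, negb e0) :: R.
Proof.
  intros V NC. set (P := P0 ++ [(g0, e0)]) in *. set (u := ginv (prefix_val P) ** x).
  destruct (classic (joinable P (letters u))) as [J|NJ].
  - exfalso. apply NC. exists (letters u).
    replace x with (word_val (P, gone) ** u) by (unfold u, prefix_val; rewrite mulKVg; reflexivity).
    unfold letters at 1. rewrite nf_prefix_mul; auto.
  - destruct (letters u) as [|[g e] R] eqn:EU; [exfalso; apply NJ, joinable_nilr|].
    exists R. unfold P in NJ. rewrite joinable_rcons in NJ.
    destruct (classic (g = gone)) as [->|Eg]; [|exfalso; apply NJ; intro; contradiction].
    do 2 f_equal. destruct e, e0; simpl; auto; exfalso; apply NJ; auto.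
Qed.

Lemma nf_word_repeat s e j : Srep e s -> nf_word (repeat (s, e) j).
Proof.
  intro S. induction j as [|j IH]; [apply nf_word_nil|].
  apply nf_word_cons; [exact S | exact IH|].
  intros g2 e2 r E _. destruct j; [discriminate | injection E as _ -> _; reflexivity].
Qed.

Lemma repeat_cat_inj (A : Type) (a b : A) j k (R1 R2 : list A) :
  a <> b -> repeat a j ++ b :: R1 = repeat a k ++ b :: R2 -> j = k.
Proof.
  intro nab. revert k. induction j as [|j IH]; intros [|k] E; simpl in E; auto.
  - injection E as E _. congruence.
  - injection E as E _. congruence.
  - injection E as E. f_equal. exact (IH k E).
Qed.

(* D is the cylinder of P, and g_j is the value of s^j times the inverse value of P,
   for a representative s <> 1. *)
Lemma interior_trivial_powers : trivial_set Int -> is_powers_group Gam.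
Proof.
  intros TI F HF n _. destruct (common_separating_prefix F TI HF) as [P [NP [VP HP]]].
  destruct (exists_last NP) as [P0 [[g0 eP] EP]]. rewrite EP in VP, HP.
  destruct (Srep_nontrivial (negb eP)) as [s [Ss ns]].
  set (gj := fun j => prefix_val (repeat (s, negb eP) j) ** ginv (prefix_val (P0 ++ [(g0, eP)]))).
  assert (Lj : forall j x, ~ has_prefix (P0 ++ [(g0, eP)]) x -> exists R,
      letters (gj j ** x) = repeat (s, negb eP) j ++ (gone, negb eP) :: R).
  { intros j x NC. destruct (@letters_off_prefix P0 g0 eP x VP NC) as [R ER]. exists R.
    unfold gj. rewrite <- mulgA. unfold letters at 1. unfold prefix_val at 1.
    rewrite nf_prefix_mul; [rewrite ER; reflexivity | apply nf_word_repeat, Ss|].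
    rewrite ER. destruct j as [|j]; [apply joinable_nill|].
    cbn [repeat]. rewrite repeat_cons. apply joinable_rcons. auto. }
  exists (has_prefix (P0 ++ [(g0, eP)])), gj. split.
  - intros f x Hf Cx. apply HP; auto.
  - intros j k _ _ njk x y Nx Ny E. apply njk.
    destruct (Lj j x Nx) as [R1 E1]. destruct (Lj k y Ny) as [R2 E2].
    rewrite E, E2 in E1. symmetry in E1. apply repeat_cat_inj in E1; [exact E1|].
    intro Es. injection Es as Es. contradiction.
Qed.

Definition conj_off_G : Prop :=
  forall F : list Gam, (forall f, In f F -> f <> gone) ->
  exists g : Gam, forall f, In f F -> forall a : G, conj g f <> iota a.

Definition conj_off_H : Prop :=
  forall F : list Gam, (forall f, In f F -> f <> gone) ->
  exists g : Gam, forall f, In f F -> forall a : G, H a -> conj g f <> iota a.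

Definition conj_off_HG : Prop :=
  forall F : list G, (forall f, In f F -> f <> gone) ->
  exists g : Gam, forall f, In f F -> forall a : G, H a -> conj g (iota f) <> iota a.

Definition conj_off_HH : Prop :=
  forall F : list G, (forall f, In f F -> H f /\ f <> gone) ->
  exists g : Gam, forall f, In f F -> forall a : G, H a -> conj g (iota f) <> iota a.

Lemma interior_trivial_iff_quasi_kernel e : trivial_set Int <-> trivial_set (Kq e).
Proof.
  split; [intros TI x; apply interior_trivial_quasi_kernel, TI|].
  intro T. apply quasi_kernels_trivial_interior. intro e'.
  destruct (bool_dec e' e) as [->|ne]; [exact T|].
  replace e with (negb e') in T by (destruct e, e'; simpl in *; congruence).
  apply quasi_kernel_trivial_negb, T.
Qed.

Lemma interior_trivial_conj_off_G : trivial_set Int -> conj_off_G.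
Proof.
  intros TI F HF. destruct (common_separating_prefix F TI HF) as [P [NP [VP HP]]].
  exists (ginv (prefix_val P)). intros f Hf a E. unfold conj in E. rewrite invgK in E.
  apply (HP f Hf (prefix_val P) (has_prefix_prefix_val VP)).
  replace (f ** prefix_val P) with (prefix_val P ** iota a)
    by (rewrite <- E, !mulgA; gsimpl; reflexivity).
  exists nil. rewrite app_nil_r, letters_mulr. apply letters_word_val, VP.
Qed.

Lemma conj_off_G_conj_off_H : conj_off_G -> conj_off_H.
Proof. intros C F HF. destruct (C F HF) as [g Hg]. exists g. intros f Hf a _. apply Hg, Hf. Qed.

Lemma conj_off_H_conj_off_HG : conj_off_H -> conj_off_HG.
Proof.
  intros C F HF. destruct (C (map iota F)) as [g Hg].
  - intros f Hf. apply in_map_iff in Hf as [f0 [<- Hf0]]. intro E.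
    apply (HF f0 Hf0), iota_inj. rewrite E, iota1. reflexivity.
  - exists g. intros f Hf. apply Hg, in_map, Hf.
Qed.

Lemma conj_off_HG_conj_off_HH : conj_off_HG -> conj_off_HH.
Proof. intros C F HF. apply C. intros f Hf. apply HF, Hf. Qed.

Lemma conj_off_HH_interior_trivial : conj_off_HH -> trivial_set Int.
Proof.
  intro C. apply (interior_trivial_iff_quasi_kernel true). intros k Kk. apply NNPP. intro nk.
  destruct (quasi_kernel_conj_pair Kk nk) as [F [HF HG]].
  destruct (C F HF) as [g Hg]. destruct (HG g) as [f [Hf [a [Ha E]]]].
  exact (Hg f Hf a Ha E).
Qed.

Theorem interior_trivial_tfae :
  ((trivial_set Int <-> exists e, trivial_set (Kq e)) /\
   (trivial_set Int <-> forall e, trivial_set (Kq e)) /\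
   (trivial_set Int <-> conj_off_G) /\ (trivial_set Int <-> conj_off_H) /\
   (trivial_set Int <-> conj_off_HG) /\ (trivial_set Int <-> conj_off_HH)) /\
  (trivial_set Int -> is_powers_group Gam).
Proof.
  assert (Iex : trivial_set Int <-> exists e, trivial_set (Kq e)).
  { split; [intro TI; exists true; apply (interior_trivial_iff_quasi_kernel true), TI|].
    intros [e T]. apply (interior_trivial_iff_quasi_kernel e), T. }
  assert (Iall : trivial_set Int <-> forall e, trivial_set (Kq e)).
  { split; [intros TI e; apply (interior_trivial_iff_quasi_kernel e), TI|].
    intro T. apply (interior_trivial_iff_quasi_kernel true), T. }
  pose proof interior_trivial_conj_off_G.
  pose proof conj_off_G_conj_off_H.
  pose proof conj_off_H_conj_off_HG.
  pose proof conj_off_HG_conj_off_HH.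
  pose proof conj_off_HH_interior_trivial.
  pose proof interior_trivial_powers.
  tauto.
Qed.

End HNNExtension.

Unset Implicit Arguments.

Theorem mainTheorem13 (G : Group) (H : G -> Prop) (theta : G -> G)
  (Gam : Group) (iota : G -> Gam) (tau : Gam) (Sm Sp : G -> Prop) :
  is_subgroup H ->
  inj_hom_on H theta ->
  IsHNN H theta iota tau ->
  (* non-ascending: H <> G and theta(H) <> G *)
  ~ (forall g : G, H g) ->
  ~ (forall g : G, image_on H theta g) ->
  (* S_{-1}, S_1: left coset representatives of H, theta(H), containing 1 *)
  left_transversal H Sm -> Sm gone ->
  left_transversal (image_on H theta) Sp -> Sp gone ->
  let c1 := trivial_set (interior H iota tau Sm Sp) in
  let c2 := exists e : bool, trivial_set (quasi_kernel H iota tau Sm Sp e) in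
  let c2' := forall e : bool, trivial_set (quasi_kernel H iota tau Sm Sp e) in
  let c3 := forall F : list Gam, (forall f, In f F -> f <> gone) ->
            exists g : Gam, forall f, In f F -> forall a : G, conj g f <> iota a in
  let c4 := forall F : list Gam, (forall f, In f F -> f <> gone) ->
            exists g : Gam, forall f, In f F -> forall a : G, H a -> conj g f <> iota a in
  let c5 := forall F : list G, (forall f, In f F -> f <> gone) ->
            exists g : Gam, forall f, In f F -> forall a : G, H a -> conj g (iota f) <> iota a in
  let c6 := forall F : list G, (forall f, In f F -> H f /\ f <> gone) ->
            exists g : Gam, forall f, In f F -> forall a : G, H a -> conj g (iota f) <> iota a in
  ((c1 <-> c2) /\ (c1 <-> c2') /\ (c1 <-> c3) /\ (c1 <-> c4) /\ (c1 <-> c5) /\ (c1 <-> c6)) /\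
  (c1 -> is_powers_group Gam).
Proof.
  intros H_sub theta_inj Gam_HNN H_proper thetaH_proper Sm_tr Sm1 Sp_tr Sp1.
  exact (interior_trivial_tfae H_sub theta_inj Gam_HNN H_proper thetaH_proper Sm_tr Sm1 Sp_tr Sp1).
Qed.
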